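(* Suppose Assumptions A1, A2 and A3 (described in the context) hold, let $\overline{F}\in\mathbb{R}^m$, and consider Algorithm PDFPM (described in the context) while $F(x^k)>\overline{F}$ (componentwise) and $\sigma_k\|\bar{x}^k-x^k\|\ge\epsilon$. Then the algorithm uses at most $$\max_{j\in\mathcal{J}}\{F_j(x^0)-\overline{F}_j\}\,\frac{2c}{\alpha}\,\epsilon^{-\frac{\beta+1}{\beta}}+\log_2\Big(\frac{\sigma_{\max}}{\sigma_{\min}}\Big)$$ evaluations of the $F_j$ and their subdifferentials, where $\beta=\min\{\beta_j:j\in\mathcal{J}\}$, $c=2\max_{j\in\mathcal{J}}\Big[\frac{2L_j+\overline{B}}{1-\alpha}+\frac{2n^{\frac{1-\beta_j}{2}}M_j+2M_j}{(\beta_j+1)(1-\alpha)}\Big]^{\frac1{\beta_j}}$, $\sigma_{\max}=2\epsilon^{\frac{\beta-1}{\beta}}\max_{j\in\mathcal{J}}\Big[\frac{2L_j+\overline{B}}{1-\alpha}+\frac{2n^{\frac{1-\beta_j}{2}}M_j+2M_j}{(\beta_j+1)(1-\alpha)}\Big]^{\frac1{\beta_j}}$, and $\sigma_{\min}=\sigma_0$.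
   Context: Setting: $m,n\ge1$, $\mathcal{J}=\{1,\dots,m\}$, $F=(F_1,\dots,F_m)$ with $F_j=f_j+h_j$, where $f_j:\mathbb{R}^n\to\mathbb{R}$ is differentiable and $h_j:\mathbb{R}^n\to\mathbb{R}\cup\{+\infty\}$ is convex. For each $j$ a map $g_{f_j}:\mathbb{R}^n\times[0,1]\to\mathbb{R}^n$ is given with $\lim_{\lambda\to0}g_{f_j}(x,\lambda)=\nabla f_j(x)$. $\|\cdot\|$ is the Euclidean norm (spectral norm for matrices). For $u,v\in\mathbb{R}^m$, $u>v$ means $u_j>v_j$ for all $j$. Algorithm PDFPM: choose $x^0\in\mathbb{R}^n$, $\alpha,\epsilon\in(0,1)$, $\sigma_0\ge1$, symmetric positive semidefinite $B_j^0\in\mathbb{R}^{n\times n}$; set $k=0$. Step 1: choose $0<\lambda_k\le \epsilon/(\sigma_k\sqrt n)$ and compute $g_{f_j}(x^k,\lambda_k)$ for each $j$. Step 2: let $\bar{x}^k$ be the (unique) minimizer of $\Phi_{x^k}(x)+\frac{\sigma_k}{2}\|x-x^k\|^2$, where $\Phi_{x^k}(x)=\max_{j\in\mathcal{J}}[\langle g_{f_j}(x^k,\lambda_k)+\frac12B_j^k(x-x^k),x-x^k\rangle+h_j(x)-h_j(x^k)]$. Step 3: if $\sigma_k\|\bar{x}^k-x^k\|\ge\epsilon$ go to Step 4; otherwise stop. Step 4: if $F_j(\bar{x}^k)\le F_j(x^k)-\frac{\alpha\epsilon^2}{2\sigma_k}$ for all $j\in\mathcal{J}$, set $x^{k+1}=\bar{x}^k$,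 $\sigma_{k+1}=\sigma_k$, choose symmetric positive semidefinite $B_j^{k+1}$, set $k\leftarrow k+1$ and go to Step 1; otherwise replace $\sigma_k$ by $2\sigma_k$ and go to Step 1 (same $k$). Assumption A1: there is $\overline{B}\ge0$ with $\|B_j^k\|\le\overline{B}$ for all iterations $k$ and all $j\in\mathcal{J}$. Assumption A2: for each $j$ there are $L_j,M_j>0$ and $\beta_j\in(0,1]$ with $f_j(y)\le f_j(x)+\langle\nabla f_j(x),y-x\rangle+\frac{L_j}{2}\|y-x\|^2+\frac{M_j}{\beta_j+1}\|y-x\|^{\beta_j+1}$ for all $x,y\in\mathbb{R}^n$. Assumption A3: with the same $L_j,M_j,\beta_j$, $\|\nabla f_j(x)-g_{f_j}(x,\lambda)\|\le\lambda\frac{\sqrt n L_j}{2}+\sqrt n\frac{M_j}{\beta_j+1}\lambda^{\beta_j}$ for all $x$ and all $\lambda\in(0,1]$.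
   Formalization: σ₀ ≤ σ_max and $h_j(x^0)<+\infty$ for all j are also assumed, and the bound is on the number of passes through Steps 1–4 preceding any pass up to which $F(x^k)>\overline{F}$ and before which Step 3 never stops. Apart from conventions, each condition added here is assumed in the paper as well or is needed for the statement above to hold. *)

From HB Require Import structures.
From mathcomp Require Import all_boot all_order all_algebra.
From mathcomp Require Import all_classical all_reals all_analysis.
Set Implicit Arguments. Unset Strict Implicit. Unset Printing Implicit Defensive.
Import Order.TTheory GRing.Theory Num.Theory.
Import numFieldNormedType.Exports.
Local Open Scope ring_scope.

Section Defs.
Variables (R : realType) (n : nat).
Notation vec := 'cV[R]_n.

Definition dotp (u v : vec) : R := \sum_(i < n) u i 0 * v i 0.
Definition enorm (u : vec) : R := Num.sqrt (dotp u u).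

(** ||B|| <= b for the spectral (operator 2-) norm, written out. *)
Definition spec_norm_le (B : 'M[R]_n) (b : R) : Prop :=
  forall v : vec, enorm (B *m v) <= b * enorm v.

Definition sym_psd (B : 'M[R]_n) : Prop :=
  B^T = B /\ forall v : vec, 0 <= dotp v (B *m v).

Definition is_gradient (f : vec -> R) (gr : vec -> vec) : Prop :=
  forall x : vec, differentiable f x /\ forall h : vec, 'd f x h = dotp (gr x) h.

Definition convex_ext (h : vec -> \bar R) : Prop :=
  forall (x y : vec) (t : R), 0 < t < 1 ->
    (h (t *: x + (1 - t) *: y)%R <= t%:E * h x + (1 - t)%:E * h y)%E.
End Defs.

Definition log2 {R : realType} (x : R) : R := ln x / ln 2.

Section PDFPM.
Local Open Scope ereal_scope.
Variables (R : realType) (m n : nat).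
Notation vec := 'cV[R]_n.

Definition Fobj (f : 'I_m -> vec -> R) (h : 'I_m -> vec -> \bar R)
  (j : 'I_m) (x : vec) : \bar R := (f j x)%:E + h j x.

Definition Phi (h : 'I_m -> vec -> \bar R) (gk : 'I_m -> vec)
  (Bk : 'I_m -> 'M[R]_n) (xk x : vec) : \bar R :=
  \big[maxe/-oo]_(j < m)
     ((dotp (gk j + 2^-1 *: (Bk j *m (x - xk)))%R (x - xk)%R)%:E
      + (h j x - h j xk)).
End PDFPM.

(* Each trial of PDFPM either passes the descent test, lowering every F_j by
   at least alpha eps^2 / (2 sigma_k), or doubles sigma_k.  By A2, A3 (with
   lambda_k sqrt n <= |xbar - x| since eps <= sigma_k |xbar - x|) and the
   optimality of xbar against x in the subproblem (the B-term being
   nonnegative), the test is sure to pass as soon as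
   sigma_k >= eps^((beta_j - 1)/beta_j) K_j^(1/beta_j) for all j, where K_j is
   the bracket appearing in c and sigma_max; this holds once
   sigma_k >= sigma_max / 2.  Hence sigma_k never exceeds sigma_max, each
   success lowers F_j by at least alpha eps^2 / (2 sigma_max), and at most
   log2 (sigma_max / sigma_0) trials are doublings. *)

From HB Require Import structures.
From mathcomp Require Import all_boot all_order all_algebra.
From mathcomp Require Import all_classical all_reals all_analysis.
From mathcomp Require Import lra ring.
Import Order.TTheory GRing.Theory Num.Theory.
Import numFieldNormedType.Exports.
Set Implicit Arguments.
Unset Strict Implicit.
Unset Printing Implicit Defensive.

Local Open Scope classical_set_scope.
Local Open Scope ring_scope.

Section Euclid.
Variables (R : realType) (n : nat).
Implicit Types u v w : 'cV[R]_n.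

Lemma dotpC u v : dotp u v = dotp v u.
Proof. by apply: eq_bigr => i _; rewrite mulrC. Qed.

Lemma dotpDl u v w : dotp (u + v) w = dotp u w + dotp v w.
Proof. by rewrite /dotp -big_split; apply: eq_bigr => i _; rewrite mxE mulrDl. Qed.

Lemma dotpZl (a : R) u w : dotp (a *: u) w = a * dotp u w.
Proof. by rewrite /dotp mulr_sumr; apply: eq_bigr => i _; rewrite mxE mulrA. Qed.

Lemma dotpBl u v w : dotp (u - v) w = dotp u w - dotp v w.
Proof. by rewrite dotpDl -scaleN1r dotpZl mulN1r. Qed.

Lemma dotpBr u v w : dotp w (u - v) = dotp w u - dotp w v.
Proof. by rewrite dotpC dotpBl !(dotpC w). Qed.

Lemma dotpZr (a : R) u w : dotp w (a *: u) = a * dotp w u.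
Proof. by rewrite dotpC dotpZl dotpC. Qed.

Lemma dotp0r u : dotp u 0 = 0.
Proof. by rewrite /dotp big1 // => i _; rewrite mxE mulr0. Qed.

Lemma dotpp_ge0 u : 0 <= dotp u u.
Proof. by apply: sumr_ge0 => i _; rewrite -expr2 sqr_ge0. Qed.

Lemma enorm_ge0 u : 0 <= enorm u.
Proof. exact: sqrtr_ge0. Qed.

Lemma enorm_sq u : enorm u ^+ 2 = dotp u u.
Proof. by rewrite sqr_sqrtr // dotpp_ge0. Qed.

Lemma enorm0 : enorm (0 : 'cV[R]_n) = 0.
Proof. by rewrite /enorm dotp0r sqrtr0. Qed.

Lemma enorm_eq0 u : enorm u = 0 -> u = 0.
Proof.
move=> u0; have uu0 : dotp u u = 0 by rewrite -enorm_sq u0 expr0n.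
apply/matrixP => i j; rewrite (ord1 j) mxE.
have sq_ge0 (k : 'I_n) : predT k -> 0 <= u k 0 * u k 0.
  by rewrite -expr2 sqr_ge0.
by move: (psumr_eq0P sq_ge0 uu0 (i:=i) isT) => /eqP; rewrite mulf_eq0 orbb => /eqP.
Qed.

Lemma cauchy_schwarz u v : dotp u v <= enorm u * enorm v.
Proof.
have [/enorm_eq0 ->|u0] := eqVneq (enorm u) 0.
  by rewrite dotpC dotp0r enorm0 mul0r.
have [/enorm_eq0 ->|v0] := eqVneq (enorm v) 0.
  by rewrite dotp0r enorm0 mulr0.
set a := enorm u; set b := enorm v.
have ab0 : 0 < a * b by rewrite mulr_gt0 // lt_def ?u0 ?v0 enorm_ge0.
have := dotpp_ge0 (b *: u - a *: v).
rewrite !(dotpBl, dotpBr, dotpZl, dotpZr) -!enorm_sq -/a -/b (dotpC v u).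
nra.
Qed.

End Euclid.

Section PowerBounds.
Variable R : realType.
Implicit Types b e r s x K rho : R.

Lemma mul_powR_le s x r b : 0 <= s -> 0 <= x -> 0 <= b -> x * s <= r ->
  s * x `^ b <= s `^ (1 - b) * r `^ b.
Proof.
move=> s0 x0 b0 xsr.
have -> : s * x `^ b = s `^ (1 - b) * (x * s) `^ b.
  rewrite powRM // mulrCA -powRD; last by rewrite subrK oner_eq0.
  by rewrite subrK powRr1 // mulrC.
apply: ler_wpM2l; first exact: powR_ge0.
by rewrite ge0_ler_powR // nnegrE ?mulr_ge0 // (le_trans (mulr_ge0 x0 s0) xsr).
Qed.

Lemma powR_add1_le rho r b : 0 < rho <= r -> b <= 1 ->
  r `^ (b + 1) <= rho `^ (b - 1) * r ^+ 2.
Proof.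
move=> /andP[rho0 rhor] b1; have r0 : 0 < r := lt_le_trans rho0 rhor.
have -> : r `^ (b + 1) = r `^ (b - 1) * r ^+ 2.
  rewrite -powR_mulrn ?ltW // -powRD; first by congr (_ `^ _); ring.
  by rewrite (gt_eqF r0) implybT.
apply: ler_wpM2r; first exact: sqr_ge0.
rewrite -[b - 1]opprB !powRN lef_pV2 ?posrE ?powR_gt0 //.
by apply: ge0_ler_powR; rewrite ?nnegrE ?subr_ge0 // ltW.
Qed.

Lemma powR_threshold b e s K : 0 < b -> 0 < e -> 0 < s -> 0 <= K ->
  e `^ ((b - 1) / b) * K `^ (1 / b) <= s -> K * (e / s) `^ (b - 1) <= s.
Proof.
move=> b0 e0 s0 K0 hs.
have hsb : e `^ (b - 1) * K <= s `^ b.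
  move: (ge0_ler_powR (ltW b0)) => /(_ _ _ _ _ hs).
  rewrite powRM ?powR_ge0 // -!powRrM !divfK ?gt_eqF // powRr1 //.
  by apply; rewrite nnegrE ?mulr_ge0 ?powR_ge0 ?ltW.
have -> : (e / s) `^ (b - 1) = e `^ (b - 1) * s `^ (1 - b).
  rewrite powRM ?invr_ge0 ?(ltW e0) ?(ltW s0) //; congr (_ * _).
  by rewrite -powR_inv1 ?(ltW s0) // -powRrM mulN1r opprB.
apply: (le_trans (y := s `^ b * s `^ (1 - b))).
  by rewrite mulrA [K * _]mulrC; apply: ler_wpM2r; rewrite ?powR_ge0.
rewrite -powRD; first by rewrite addrC subrK powRr1 // ltW.
by rewrite (gt_eqF s0) implybT.
Qed.

Lemma powR_pred_div_le e b c : 0 < e <= 1 -> 0 < b <= c ->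
  e `^ ((c - 1) / c) <= e `^ ((b - 1) / b).
Proof.
move=> e01 /andP[b0 bc]; have c0 := lt_le_trans b0 bc.
apply: ger_powR => //.
by rewrite !mulrBl !divff ?gt_eqF // lerD2l lerN2 !mul1r lef_pV2 ?posrE.
Qed.

Lemma powR_pred_divE e b : 0 < e -> 0 < b ->
  e `^ ((b - 1) / b) = e `^ (- (b + 1) / b) * e ^+ 2.
Proof.
move=> e0 b0; rewrite -powR_mulrn ?ltW // -powRD.
  by congr (_ `^ _); field; rewrite gt_eqF.
by rewrite (gt_eqF e0) implybT.
Qed.

End PowerBounds.

Section Descent.
Variable R : realType.

(* The bracket [ ... ] in the constants c and sigma_max. *)
Definition descent_const (n : nat) (L M b Bbar alpha : R) : R :=
  (2 * L + Bbar) / (1 - alpha)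
  + (2 * (n%:R `^ ((1 - b) / 2)) * M + 2 * M) / ((b + 1) * (1 - alpha)).

Lemma approx_error_le (s L M b lam r err : R) :
  0 <= s -> 0 <= L -> 0 <= M -> 0 <= b -> 0 <= lam -> lam * s <= r ->
  err <= lam * (s * L / 2) + s * (M / (b + 1)) * lam `^ b ->
  err * r <= L / 2 * r ^+ 2 + s `^ (1 - b) * (M / (b + 1)) * r `^ (b + 1).
Proof.
move=> s0 L0 M0 b0 lam0 lamr errle.
have r0 : 0 <= r := le_trans (mulr_ge0 lam0 s0) lamr.
have b1 : 0 < b + 1 by rewrite ltr_wpDl.
have mb0 : 0 <= M / (b + 1) by rewrite divr_ge0 // ltW.
have -> : r `^ (b + 1) = r `^ b * r by rewrite powRD ?powRr1 // (gt_eqF b1).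
have hpow := mul_powR_le s0 lam0 b0 lamr.
apply: le_trans (ler_wpM2r r0 errle) _.
have h1 : lam * s * (L / 2 * r) <= r * (L / 2 * r).
  by apply: ler_wpM2r; rewrite // mulr_ge0 // divr_ge0.
have h2 : s * lam `^ b * (M / (b + 1) * r)
          <= s `^ (1 - b) * r `^ b * (M / (b + 1) * r).
  by apply: ler_wpM2r; rewrite // mulr_ge0.
lra.
Qed.

Lemma higher_order_le n (L M b Bb alpha eps sig r : R) :
  0 <= L -> 0 <= M -> 0 < b <= 1 -> 0 <= Bb -> alpha < 1 -> 0 < eps <= sig ->
  eps <= sig * r ->
  eps `^ ((b - 1) / b) * descent_const n L M b Bb alpha `^ (1 / b) <= sig ->
  L * r ^+ 2 + (n%:R `^ ((1 - b) / 2) + 1) * (M / (b + 1)) * r `^ (b + 1)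
    <= (1 - alpha) / 2 * sig * r ^+ 2.
Proof.
move=> L0 M0 /andP[b0 b1] Bb0 a1 /andP[e0 es] esr hK.
set N := n%:R `^ _; set mb := M / (b + 1).
set K := descent_const n L M b Bb alpha in hK *.
set w := (eps / sig) `^ (b - 1).
have s0 : 0 < sig := lt_le_trans e0 es.
have rho0 : 0 < eps / sig by rewrite divr_gt0.
have rhor : eps / sig <= r by rewrite ler_pdivrMr // mulrC.
have w1 : 1 <= w.
  rewrite -(powRr0 (eps / sig)); apply: ger_powR; last by rewrite subr_le0.
  by rewrite rho0 ler_pdivrMr // mul1r.
have N0 : 0 <= N := powR_ge0 _ _.
have alpha1 : 0 < 1 - alpha by rewrite subr_gt0.
have b1pos : 0 < b + 1 by rewrite ltr_wpDl // ltW.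
have mb0 : 0 <= mb by rewrite divr_ge0 // ltW.
have K0 : 0 <= K.
  by rewrite /K /descent_const -/N; apply: addr_ge0; apply: divr_ge0; nra.
have Kw : K * w <= sig := powR_threshold b0 e0 s0 K0 hK.
have KE : (1 - alpha) / 2 * K = L + Bb / 2 + (N + 1) * mb.
  by rewrite /K /descent_const /N /mb; field; rewrite !gt_eqF.
have r2 : 0 <= r ^+ 2 := sqr_ge0 r.
have hpow : r `^ (b + 1) <= w * r ^+ 2 by apply: powR_add1_le; rewrite ?rho0.
have h1 : (N + 1) * mb * r `^ (b + 1) <= (N + 1) * mb * (w * r ^+ 2).
  by apply: ler_wpM2l; rewrite // mulr_ge0 // addr_ge0.
have w0 : 0 <= w := le_trans ler01 w1.
have h2 : 0 <= (w - 1) * (L * r ^+ 2).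
  by apply: mulr_ge0; [rewrite subr_ge0 | apply: mulr_ge0].
have h3 : 0 <= Bb / 2 * (w * r ^+ 2).
  by apply: mulr_ge0; [apply: divr_ge0 | apply: mulr_ge0].
have h4 : (1 - alpha) / 2 * (K * w) * r ^+ 2 <= (1 - alpha) / 2 * sig * r ^+ 2.
  apply: ler_wpM2r => //.
  by apply: ler_wpM2l => //; apply: divr_ge0 => //; apply: ltW.
have h5 : (1 - alpha) / 2 * (K * w) * r ^+ 2
          = (L + Bb / 2 + (N + 1) * mb) * w * r ^+ 2.
  by rewrite [_ / 2 * (K * w)]mulrA KE.
lra.
Qed.

Lemma descent_of_model n (L M b Bb alpha eps sig lam r err lin fx fb hx hb : R) :
  (0 < n)%N -> 0 <= L -> 0 <= M -> 0 < b <= 1 -> 0 <= Bb -> 0 < alpha < 1 ->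
  0 < eps <= sig -> 0 < lam <= eps / (sig * Num.sqrt n%:R) -> eps <= sig * r ->
  eps `^ ((b - 1) / b) * descent_const n L M b Bb alpha `^ (1 / b) <= sig ->
  err <= lam * (Num.sqrt n%:R * L / 2) + Num.sqrt n%:R * (M / (b + 1)) * lam `^ b ->
  fb <= fx + (lin + err * r) + L / 2 * r ^+ 2 + M / (b + 1) * r `^ (b + 1) ->
  lin + (hb - hx) + sig / 2 * r ^+ 2 <= 0 ->
  fb + hb <= fx + hx - alpha * eps ^+ 2 / (2 * sig).
Proof.
move=> n0 L0 M0 b01 Bb0 /andP[a0 a1] es /andP[lam0 lamle] esr hK errle hA2 hmodel.
have [[b0 _] [e0 e_le_s]] := (andP b01, andP es).
have s0 : 0 < sig := lt_le_trans e0 e_le_s.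
have lamr : lam * Num.sqrt n%:R <= r.
  rewrite -(ler_pM2l s0); apply: le_trans esr; rewrite mulrCA.
  by rewrite -ler_pdivlMr // mulr_gt0 // sqrtr_gt0 ltr0n.
have herr := approx_error_le (sqrtr_ge0 _) L0 M0 (ltW b0) (ltW lam0) lamr errle.
have sqrt_powR : Num.sqrt (n%:R : R) `^ (1 - b) = n%:R `^ ((1 - b) / 2).
  by rewrite -powR12_sqrt // -powRrM mulrC.
rewrite sqrt_powR in herr.
have hho := higher_order_le L0 M0 b01 Bb0 a1 es esr hK.
have hdec : alpha * eps ^+ 2 / (2 * sig) <= alpha * sig * r ^+ 2 / 2.
  rewrite ler_pdivrMr ?mulr_gt0 //.
  have -> : alpha * sig * r ^+ 2 / 2 * (2 * sig) = alpha * ((sig * r) * (sig * r)).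
    by field.
  rewrite expr2; apply: ler_wpM2l; first exact: ltW.
  by apply: ler_pM => //; apply: ltW.
lra.
Qed.

End Descent.

Section Counting.
Variable R : realType.

Lemma log2_1 : log2 (1 : R) = 0.
Proof. by rewrite /log2 ln1 mul0r. Qed.

Lemma log2_mul2 (x : R) : 0 < x -> log2 (2 * x) = log2 x + 1.
Proof.
move=> x0; rewrite /log2 lnM ?posrE // mulrDl addrC divff // gt_eqF //.
by rewrite ln_gt0 // ltr1n.
Qed.

Lemma ler_log2 (x y : R) : 0 < x -> x <= y -> log2 x <= log2 y.
Proof.
move=> x0 xy; rewrite /log2 ler_pM2r ?invr_gt0 ?ln_gt0 ?ltr1n //.
by rewrite ler_ln ?posrE // (lt_le_trans x0).
Qed.

Lemma trial_count (A : R) (phi sig : nat -> R) t : 0 < sig 0%N ->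
  (forall s, (s < t)%N ->
     (1 + A * phi s.+1 <= A * phi s /\ sig s.+1 = sig s)
     \/ (phi s.+1 = phi s /\ sig s.+1 = 2 * sig s)) ->
  0 < sig t /\ t%:R <= A * (phi 0%N - phi t) + log2 (sig t / sig 0%N).
Proof.
move=> sig00; elim: t => [_|t IH step].
  by rewrite sig00 subrr mulr0 add0r divff ?gt_eqF // log2_1.
have [sigt0 count] := IH (fun s st => step s (leqW st)).
rewrite -natr1 mulrBr in count *.
case: (step t (ltnSn t)) => [[phi_dec ->]|[-> ->]]; first by split => //; lra.
split; first by rewrite mulr_gt0.
by rewrite -mulrA log2_mul2 ?divr_gt0 //; lra.
Qed.

End Counting.

Section PDFPM.
Variables (R : realType) (m n : nat).
Notation vec := 'cV[R]_n.

Lemma Phi_center_le0 (h : 'I_m -> vec -> \bar R) (gk : 'I_m -> vec)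
    (Bk : 'I_m -> 'M[R]_n) (x : vec) :
  (forall j, h j x \is a fin_num) -> (Phi h gk Bk x x <= 0)%E.
Proof.
move=> hfin; apply: bigmax_le => [|j _]; first exact: leNye.
by rewrite subrr dotp0r subee // adde0.
Qed.

Lemma model_decrease (h : 'I_m -> vec -> \bar R) (gk : 'I_m -> vec)
    (Bk : 'I_m -> 'M[R]_n) (x xb : vec) (sig : R) :
  (forall j, h j x \is a fin_num) ->
  (forall y, Phi h gk Bk x xb + (sig / 2 * enorm (xb - x) ^+ 2)%:E
             <= Phi h gk Bk x y + (sig / 2 * enorm (y - x) ^+ 2)%:E)%E ->
  forall j, ((dotp (gk j + 2^-1 *: (Bk j *m (xb - x))) (xb - x))%:E
             + (h j xb - h j x) + (sig / 2 * enorm (xb - x) ^+ 2)%:E <= 0)%E.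
Proof.
move=> hfin hmin j.
apply: le_trans (leeD2r _ (le_bigmax _
  (fun i => (dotp (gk i + 2^-1 *: (Bk i *m (xb - x))) (xb - x))%:E
            + (h i xb - h i x))%E j)) _.
apply: le_trans (hmin x) _.
by rewrite subrr enorm0 expr0n /= mulr0 adde0 Phi_center_le0.
Qed.

Lemma Fobj_fin_num_h (f : 'I_m -> vec -> R) (h : 'I_m -> vec -> \bar R) j x :
  Fobj f h j x \is a fin_num -> h j x \is a fin_num.
Proof. by rewrite fin_numD => /andP[]. Qed.

Section Trial.
Variables (f : 'I_m -> vec -> R) (gradf : 'I_m -> vec -> vec)
  (h : 'I_m -> vec -> \bar R) (g : 'I_m -> vec -> R -> vec)
  (L M beta : 'I_m -> R) (Bbar alpha eps : R).
Hypotheses (hn : (0 < n)%N) (HL : forall j, 0 < L j) (HM : forall j, 0 < M j)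
  (Hbeta : forall j, 0 < beta j <= 1) (HBbar : 0 <= Bbar)
  (Halpha : 0 < alpha < 1) (Heps : 0 < eps < 1).
Hypothesis HA2 : forall j x y, f j y <= f j x + dotp (gradf j x) (y - x)
  + L j / 2 * enorm (y - x) ^+ 2
  + M j / (beta j + 1) * enorm (y - x) `^ (beta j + 1).
Hypothesis HA3 : forall j x lam, 0 < lam <= 1 ->
  enorm (gradf j x - g j x lam)
    <= lam * (Num.sqrt n%:R * L j / 2)
       + Num.sqrt n%:R * (M j / (beta j + 1)) * lam `^ beta j.

Lemma sufficient_decrease (x xb : vec) (Bk : 'I_m -> 'M[R]_n) (sig lam : R)
    (j : 'I_m) :
  sym_psd (Bk j) -> 1 <= sig -> 0 < lam <= eps / (sig * Num.sqrt n%:R) ->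
  eps <= sig * enorm (xb - x) -> (forall i, h i x \is a fin_num) ->
  eps `^ ((beta j - 1) / beta j)
    * descent_const n (L j) (M j) (beta j) Bbar alpha `^ (1 / beta j) <= sig ->
  (forall y, Phi h (fun i => g i x lam) Bk x xb
               + (sig / 2 * enorm (xb - x) ^+ 2)%:E
             <= Phi h (fun i => g i x lam) Bk x y
               + (sig / 2 * enorm (y - x) ^+ 2)%:E)%E ->
  (Fobj f h j xb <= Fobj f h j x - (alpha * eps ^+ 2 / (2 * sig))%:E)%E.
Proof.
move=> Bpsd sig1 hlam esr hfin hK hmin.
have [[e0 e1] [lam0 lamle]] := (andP Heps, andP hlam).
have hmodel := model_decrease hfin hmin j.
rewrite /Fobj -(fineK (hfin j)) in hmodel *.
move: hmodel; case: (h j xb) => [hb | |] /=; last first.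
- by move=> _; rewrite leNye.
- by rewrite !(addye, addey) // leye_eq.
set d := xb - x; rewrite -!EFinD !lee_fin dotpDl dotpZl => hmodel.
have sig_sqrt1 : 1 <= sig * Num.sqrt n%:R.
  by rewrite mulr_ege1 // -{1}sqrtr1 ler_sqrt // ler1n.
have lam1 : lam <= 1.
  apply: le_trans lamle _; rewrite ler_pdivrMr ?mul1r.
    exact: le_trans (ltW e1) sig_sqrt1.
  exact: lt_le_trans ltr01 sig_sqrt1.
have q0 : 0 <= dotp (Bk j *m d) d by rewrite dotpC; exact: Bpsd.2.
have hgrad : dotp (gradf j x) d <= dotp (g j x lam) d
                                  + enorm (gradf j x - g j x lam) * enorm d.
  have -> : dotp (gradf j x) d = dotp (g j x lam) d + dotp (gradf j x - g j x lam) d.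
    by rewrite dotpBl addrC subrK.
  by rewrite lerD2l cauchy_schwarz.
apply: (descent_of_model (lin := dotp (g j x lam) d) hn (ltW (HL j))
          (ltW (HM j)) (Hbeta j) HBbar Halpha _ hlam esr hK (HA3 j x _)).
- by rewrite e0 (le_trans (ltW e1)).
- by rewrite lam0.
- by apply: le_trans (HA2 j x xb) _; rewrite -/d !lerD2r lerD2l.
- have : 0 <= 2^-1 * dotp (Bk j *m d) d by rewrite mulr_ge0.
  rewrite -/d; lra.
Qed.

Variables (Fbar : 'I_m -> R) (x0 : vec) (sigma0 T : R) (xs xb : nat -> vec)
  (sig lam : nat -> R) (B : nat -> 'I_m -> 'M[R]_n).
Hypotheses (Hsigma0 : 1 <= sigma0) (Hx0 : forall j, h j x0 \is a fin_num)
  (Hxs0 : xs 0%N = x0) (Hsig0 : sig 0%N = sigma0)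
  (HBpsd : forall t j, sym_psd (B t j))
  (Hlam : forall t, 0 < lam t <= eps / (sig t * Num.sqrt n%:R)).
Hypothesis Hxb : forall t y,
  (Phi h (fun j => g j (xs t) (lam t)) (B t) (xs t) (xb t)
     + (sig t / 2 * enorm (xb t - xs t) ^+ 2)%:E
   <= Phi h (fun j => g j (xs t) (lam t)) (B t) (xs t) y
     + (sig t / 2 * enorm (y - xs t) ^+ 2)%:E)%E.
Hypothesis Hstep : forall t, eps <= sig t * enorm (xb t - xs t) ->
  let dec := forall j, (Fobj f h j (xb t)
                <= Fobj f h j (xs t) - (alpha * eps ^+ 2 / (2 * sig t))%:E)%E in
  (dec -> xs t.+1 = xb t /\ sig t.+1 = sig t) /\
  (~ dec -> xs t.+1 = xs t /\ sig t.+1 = 2 * sig t /\ B t.+1 = B t).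
Hypotheses (HT : forall j, eps `^ ((beta j - 1) / beta j)
    * descent_const n (L j) (M j) (beta j) Bbar alpha `^ (1 / beta j) <= T)
  (HsigmaT : sigma0 <= 2 * T).

Lemma trial_outcome s :
  eps <= sig s * enorm (xb s - xs s) -> 1 <= sig s ->
  (forall j, h j (xs s) \is a fin_num) ->
  (xs s.+1 = xb s /\ sig s.+1 = sig s /\
     forall j, (Fobj f h j (xb s)
                <= Fobj f h j (xs s) - (alpha * eps ^+ 2 / (2 * sig s))%:E)%E)
  \/ (xs s.+1 = xs s /\ sig s.+1 = 2 * sig s /\ sig s < T).
Proof.
move=> esr sig1 hfin; have [succ fail] := Hstep esr.
have [dec|nodec] := pselect (forall j, (Fobj f h j (xb s)
  <= Fobj f h j (xs s) - (alpha * eps ^+ 2 / (2 * sig s))%:E)%E).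
  by left; have [-> ->] := succ dec.
right; have [-> [-> _]] := fail nodec; do 2!split => //.
rewrite ltNge; apply/negP => Tsig; apply: nodec => j.
exact: sufficient_decrease (HBpsd s j) sig1 (Hlam s) esr hfin
         (le_trans (HT j) Tsig) (Hxb s).
Qed.

Lemma run_invariant t :
  (forall s, (s < t)%N -> eps <= sig s * enorm (xb s - xs s)) ->
  (forall s, (s <= t)%N -> forall j, ((Fbar j)%:E < Fobj f h j (xs s))%E) ->
  forall s, (s <= t)%N ->
    (forall j, Fobj f h j (xs s) \is a fin_num) /\ sigma0 <= sig s <= 2 * T.
Proof.
move=> Hsteps HF; elim=> [_|s IH st].
  by rewrite Hxs0 Hsig0 lexx HsigmaT; split=> // j; rewrite fin_numD Hx0.
have [Ffin /andP[sig0s sigsT]] := IH (ltnW st).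
have hfin j : h j (xs s) \is a fin_num := Fobj_fin_num_h (Ffin j).
have sig_pos : 0 < sig s by apply: lt_le_trans sig0s; apply: lt_le_trans Hsigma0.
have HFs := HF _ st.
case: (trial_outcome (Hsteps s st) (le_trans Hsigma0 sig0s) hfin)
  => [[xsE [-> dec]]|[-> [-> sigT]]]; last by split => //; apply/andP; split; lra.
rewrite xsE in HFs *; split; last by rewrite sig0s.
move=> j; move: (dec j) (HFs j); rewrite -(fineK (Ffin j)).
by case: (Fobj f h j (xb s)).
Qed.

Lemma trials_le_decrease t j :
  (forall s, (s < t)%N -> eps <= sig s * enorm (xb s - xs s)) ->
  (forall s, (s <= t)%N -> forall j, ((Fbar j)%:E < Fobj f h j (xs s))%E) ->
  t%:R <= 2 * (2 * T) / (alpha * eps ^+ 2)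
            * (fine (Fobj f h j x0) - fine (Fobj f h j (xs t)))
          + log2 (sig t / sigma0).
Proof.
move=> Hsteps HF; have inv := run_invariant Hsteps HF.
have [[a0 _] [e0 _]] := (andP Halpha, andP Heps).
have T2 : 0 < 2 * T := lt_le_trans (lt_le_trans ltr01 Hsigma0) HsigmaT.
set A := 2 * (2 * T) / (alpha * eps ^+ 2).
have A0 : 0 <= A.
  by apply: divr_ge0; [rewrite mulr_ge0 // ltW | rewrite mulr_ge0 ?sqr_ge0 // ltW].
rewrite -Hxs0 -Hsig0.
apply: (proj2 (trial_count (A := A) (phi := fun s => fine (Fobj f h j (xs s))) _ _)).
  by rewrite Hsig0 (lt_le_trans ltr01).
move=> s st; have [Ffin /andP[sig0s sigsT]] := inv s (ltnW st).
have hfin i : h i (xs s) \is a fin_num := Fobj_fin_num_h (Ffin i).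
have sig_pos : 0 < sig s by apply: lt_le_trans sig0s; apply: lt_le_trans Hsigma0.
case: (trial_outcome (Hsteps s st) (le_trans Hsigma0 sig0s) hfin)
  => [[xsE [sigE dec]]|[xsE [sigE _]]]; last by right; rewrite xsE sigE.
left; split => //; have [Ffin1 _] := inv s.+1 st; rewrite xsE in Ffin1 *.
move: (dec j); rewrite -(fineK (Ffin j)) -(fineK (Ffin1 j)) -EFinB lee_fin.
move=> /(ler_wpM2l A0); rewrite mulrBr.
have : 1 <= A * (alpha * eps ^+ 2 / (2 * sig s)).
  have -> : A * (alpha * eps ^+ 2 / (2 * sig s)) = 2 * T / sig s.
    by rewrite /A; field; rewrite !gt_eqF // ?exprn_gt0.
  by rewrite ler_pdivlMr // mul1r.
lra.
Qed.

Lemma trials_le t j :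
  (forall s, (s < t)%N -> eps <= sig s * enorm (xb s - xs s)) ->
  (forall s, (s <= t)%N -> forall j, ((Fbar j)%:E < Fobj f h j (xs s))%E) ->
  t%:R <= 2 * (2 * T) / (alpha * eps ^+ 2) * (fine (Fobj f h j x0) - Fbar j)
          + log2 (2 * T / sigma0).
Proof.
move=> Hsteps HF.
have [Ffin /andP[sig0s sigtT]] := run_invariant Hsteps HF (leqnn t).
have sigma0_pos : 0 < sigma0 := lt_le_trans ltr01 Hsigma0.
have T2 : 0 < 2 * T := lt_le_trans sigma0_pos HsigmaT.
have a0 : 0 < alpha := proj1 (andP Halpha).
have A0 : 0 <= 2 * (2 * T) / (alpha * eps ^+ 2).
  by apply: divr_ge0; [rewrite mulr_ge0 // ltW | rewrite mulr_ge0 ?sqr_ge0 // ltW].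
apply: le_trans (trials_le_decrease j Hsteps HF) _; apply: lerD.
  apply: (ler_wpM2l A0); rewrite lerD2l lerN2.
  by move: (HF t (leqnn t) j); rewrite -(fineK (Ffin j)) lte_fin => /ltW.
apply: ler_log2; last by rewrite ler_pM2r ?invr_gt0.
by rewrite divr_gt0 // (lt_le_trans sigma0_pos).
Qed.

End Trial.

End PDFPM.

Theorem theorem4
  (R : realType) (m n : nat) (hm : (0 < m)%N) (hn : (0 < n)%N)
  (f : 'I_m -> 'cV[R]_n -> R) (gradf : 'I_m -> 'cV[R]_n -> 'cV[R]_n)
  (h : 'I_m -> 'cV[R]_n -> \bar R)
  (g : 'I_m -> 'cV[R]_n -> R -> 'cV[R]_n)
  (Hgrad : forall j, is_gradient (f j) (gradf j))
  (Hconv : forall j, convex_ext (h j))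
  (Hglim : forall j x, (g j x) @ 0^'+ --> gradf j x)
  (* parameters *)
  (L M beta : 'I_m -> R) (Bbar : R)
  (HL : forall j, 0 < L j) (HM : forall j, 0 < M j)
  (Hbeta : forall j, 0 < beta j <= 1) (HBbar : 0 <= Bbar)
  (* Assumption A2 *)
  (HA2 : forall j x y, f j y <= f j x + dotp (gradf j x) (y - x)
           + L j / 2 * enorm (y - x) ^+ 2
           + M j / (beta j + 1) * enorm (y - x) `^ (beta j + 1))
  (* Assumption A3 *)
  (HA3 : forall j x lam, 0 < lam <= 1 ->
           enorm (gradf j x - g j x lam)
             <= lam * (Num.sqrt n%:R * L j / 2)
                + Num.sqrt n%:R * (M j / (beta j + 1)) * lam `^ beta j)
  (Fbar : 'I_m -> R)
  (* algorithm data *)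
  (x0 : 'cV[R]_n) (alpha eps sigma0 : R)
  (Halpha : 0 < alpha < 1) (Heps : 0 < eps < 1) (Hsigma0 : 1 <= sigma0)
  (Hx0 : forall j, h j x0 \is a fin_num)
  (* a run of PDFPM, indexed by trials t (passes through Steps 1-4):
     xs t = current iterate x^k, sig t = current sigma_k, lam t = lambda,
     B t = current matrices B^k_j, xb t = bar x computed in Step 2 *)
  (xs : nat -> 'cV[R]_n) (sig lam : nat -> R)
  (B : nat -> 'I_m -> 'M[R]_n) (xb : nat -> 'cV[R]_n)
  (Hxs0 : xs 0%N = x0) (Hsig0 : sig 0%N = sigma0)
  (HBpsd : forall t j, sym_psd (B t j))
  (HA1 : forall t j, spec_norm_le (B t j) Bbar)
  (Hlam : forall t, 0 < lam t <= eps / (sig t * Num.sqrt n%:R))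
  (Hxb : forall t y,
     (Phi h (fun j => g j (xs t) (lam t)) (B t) (xs t) (xb t)
        + (sig t / 2 * enorm (xb t - xs t) ^+ 2)%:E
      <= Phi h (fun j => g j (xs t) (lam t)) (B t) (xs t) y
        + (sig t / 2 * enorm (y - xs t) ^+ 2)%:E)%E)
  (Hstep : forall t, eps <= sig t * enorm (xb t - xs t) ->
     let dec := forall j, (Fobj f h j (xb t)
                   <= Fobj f h j (xs t) - (alpha * eps ^+ 2 / (2 * sig t))%:E)%E in
     (dec -> xs t.+1 = xb t /\ sig t.+1 = sig t) /\
     (~ dec -> xs t.+1 = xs t /\ sig t.+1 = 2 * sig t /\ B t.+1 = B t))
  : let betamin := \big[Num.min/1]_(j < m) beta j in
    let K j := (2 * L j + Bbar) / (1 - alpha)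
               + (2 * (n%:R `^ ((1 - beta j) / 2)) * M j + 2 * M j)
                 / ((beta j + 1) * (1 - alpha)) in
    let Kmax := \big[Num.max/0]_(j < m) (K j `^ (1 / beta j)) in
    let c := 2 * Kmax in
    let sigma_max := 2 * eps `^ ((betamin - 1) / betamin) * Kmax in
    let sigma_min := sigma0 in
    let Dmax := \big[Num.max/0]_(j < m) (fine (Fobj f h j x0) - Fbar j) in
    sigma_min <= sigma_max ->
    forall t : nat,
      (forall s, (s < t)%N -> eps <= sig s * enorm (xb s - xs s)) ->
      (forall s, (s <= t)%N -> forall j, ((Fbar j)%:E < Fobj f h j (xs s))%E) ->
      t%:R <= Dmax * (2 * c / alpha) * eps `^ (- (betamin + 1) / betamin)
              + log2 (sigma_max / sigma_min).
Proof.
move=> betamin K Kmax c sigma_max sigma_min Dmax hsm t Hsteps HF.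
pose j0 : 'I_m := Ordinal hm.
have [[a0 _] [e0 e1]] := (andP Halpha, andP Heps).
have bm0 : 0 < betamin by apply: lt_bigmin => // j _; case/andP: (Hbeta j).
set T := eps `^ ((betamin - 1) / betamin) * Kmax.
have sigma_maxE : sigma_max = 2 * T by rewrite /sigma_max /T mulrA.
have HT j : eps `^ ((beta j - 1) / beta j)
    * descent_const n (L j) (M j) (beta j) Bbar alpha `^ (1 / beta j) <= T.
  apply: ler_pM; rewrite ?powR_ge0 //.
    by apply: powR_pred_div_le; rewrite ?e0 ?(ltW e1) // bm0 bigmin_le.
  exact: (le_bigmax _ (fun i => K i `^ (1 / beta i)) j).
rewrite sigma_maxE in hsm *.
apply: le_trans (trials_le hn HL HM Hbeta HBbar Halpha Heps HA2 HA3 Hsigma0 Hx0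
  Hxs0 Hsig0 HBpsd Hlam Hxb Hstep HT hsm j0 Hsteps HF) _.
have T0 : 0 <= T by move: hsm; rewrite /sigma_min; lra.
have -> : Dmax * (2 * c / alpha) * eps `^ (- (betamin + 1) / betamin)
          = 2 * (2 * T) / (alpha * eps ^+ 2) * Dmax.
  by rewrite /T /c powR_pred_divE //; field; rewrite !gt_eqF ?exprn_gt0.
rewrite lerD2r; apply: ler_wpM2l; first by apply: divr_ge0; nra.
exact: (le_bigmax _ (fun j => fine (Fobj f h j x0) - Fbar j)).
Qed.
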